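(* Let $n\in(-1,1)$ and let $\mathcal{S}\in\mathscr{W}$ be $C^4$-smooth with astigmatism $s$. Suppose (3) $s^{(i)}\sim c_i\sin^{m-i}\theta$ as $\theta\to0$ and as $\theta\to\pi$, for some $m>n+3$ and $i=0,1,2$, with constants $c_i$ possibly different at $\theta=0$ and $\theta=\pi$. Then both (1) $\mathscr{L}^n_n\left(\frac{s}{\sin^{n+2}\theta}\right)\in L^2_{\sin\theta}(0,\pi)$, and (2) $n\cdot\lim_{\theta\to0}\frac{s}{\sin^2\theta}=n\cdot\lim_{\theta\to\pi}\frac{s}{\sin^2\theta}=0$ hold.
   Context: $\mathscr{W}$ is the set of embedded $C^2$-smooth topological 2-spheres in $\mathbb{R}^3$ that are rotationally symmetric and strictly convex, parametrised by the inverse Gauss map with $\theta\in[0,\pi]$ the angle between the outward normal and the symmetry axis; with support function $r=\vec X\cdot\hat n$, $r_1=\frac{\cos^2\theta}{\sin\theta}\frac{d}{d\theta}(r/\cos\theta)$, $r_2=r''+r$, and astigmatism $s=r_2-r_1$; $s^{(i)}$ is the $i$-th derivative in $\theta$. $\mathscr{L}^n_n=\frac{d^2}{d\theta^2}+\cot\theta\frac{d}{d\theta}+n(n+1)-\frac{n^2}{\sin^2\theta}$. $L^2_{\sin\theta}(0,\pi)$: complex-valued functions square integrable w.r.t. $\sin\theta\,d\theta$. *)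

From HB Require Import structures.
From mathcomp Require Import all_boot all_order all_algebra.
From mathcomp Require Import all_classical all_reals all_analysis.
Set Implicit Arguments. Unset Strict Implicit. Unset Printing Implicit Defensive.
Import Order.TTheory GRing.Theory Num.Theory.
Import numFieldNormedType.Exports.
Local Open Scope classical_set_scope.
Local Open Scope ring_scope.

Section Defs.
Variable R : realType.
Implicit Types (r f : R -> R) (t : R).

(* Radii of curvature from the support function r(theta):
   r1 = cos^2/sin * d/dtheta (r / cos) = r' cot + r   (expanded form)
   r2 = r'' + r *)
Definition rad1 r t : R := derive1 r t * (cos t / sin t) + r t.
Definition rad2 r t : R := derive1n 2 r t + r t.

Definition astig r t : R := rad2 r t - rad1 r t.

(* S in W, C^4-smooth, described by its support function r along a meridian
   (theta in R, the restriction of the support function on S^2 to a great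
   circle through the poles): r is C^4, even, 2pi-periodic, and the surface
   is strictly convex (both principal radii of curvature positive on [0,pi],
   at the poles r1 = r2 so the condition is on r2). *)
Definition W4 r : Prop :=
  (forall k : nat, (k < 4)%N -> forall x : R, derivable (derive1n k r) x 1) /\
      continuous (derive1n 4 r) /\
      (forall t, r (- t) = r t) /\
      (forall t, r (t + 2 * pi) = r t) /\
      (forall t, 0 < t < pi -> 0 < rad1 r t /\ 0 < rad2 r t) /\
    (0 < rad2 r 0 /\ 0 < rad2 r pi).

Definition Lnn (n : R) f t : R :=
  derive1n 2 f t + (cos t / sin t) * derive1 f t
  + (n * (n + 1) - n ^+ 2 / sin t ^+ 2) * f t.

Definition L2sin f : Prop :=
  (@lebesgue_measure R).-integrable `]0, pi[
     (fun t => ((f t) ^+ 2 * sin t)%:E).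

End Defs.

From HB Require Import structures.
From mathcomp Require Import all_boot all_order all_algebra.
From mathcomp Require Import all_classical all_reals all_analysis.
From mathcomp Require Import measurable_realfun ring lra.
Import Order.TTheory GRing.Theory Num.Theory.
Import numFieldNormedType.Exports.
Local Open Scope classical_set_scope.
Local Open Scope ring_scope.

(* On ]0, pi[ the astigmatism s = r'' - r' cot(theta) is C^2, and a direct computation
   gives, for f = s / sin^a with a = n + 2,
     L^n_n f = sin^(m-a-2) * Q,
   where Q is a polynomial in cos, sin and the ratios s^(i) / sin^(m-i), i <= 2.  By (3)
   these ratios converge at both ends of ]0, pi[, so Q is bounded by some K and
   |L^n_n f|^2 sin <= K^2 sin^(2(m-a-2)+1), which is integrable since 2(m-a-2)+2 > 0.
   For (2), s / sin^2 = (s / sin^m) * sin^(m-2) tends to 0 because m > n + 3 > 2. *)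

Section twice_derivable_on.
Context {R : realType}.
Implicit Types (f g : R -> R) (x d : R).

Lemma derive1_val {f x d} : is_derive x 1 f d -> derive1 f x = d.
Proof. by move=> fd; rewrite derive1E derive_val. Qed.

Lemma is_derive1 {f x} : derivable f x 1 -> is_derive x 1 f (derive1 f x).
Proof. by rewrite derive1E; exact: derivableP. Qed.

Lemma is_derive_derivable {f x d} : is_derive x 1 f d -> derivable f x 1.
Proof. by case. Qed.

Lemma derivable_continuous {f x} : derivable f x 1 -> {for x, continuous f}.
Proof. by move=> /derivable1_diffP/differentiable_continuous. Qed.

Lemma derive1M f g x : derivable f x 1 -> derivable g x 1 ->
  derive1 (f * g) x = derive1 f x * g x + f x * derive1 g x.
Proof.
move=> /is_derive1 df /is_derive1 dg; rewrite (derive1_val (is_deriveM df dg)).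
by rewrite addrC mulrC.
Qed.

Lemma derive1B f g x : derivable f x 1 -> derivable g x 1 ->
  derive1 (f - g) x = derive1 f x - derive1 g x.
Proof.
by move=> /is_derive1 df /is_derive1 dg; rewrite (derive1_val (is_deriveB df dg)).
Qed.

Definition C2_on (I : interval R) f :=
  {in I, forall x, derivable f x 1 /\ derivable (derive1 f) x 1} /\
  {in I, continuous (derive1n 2 f)}.

Lemma C2_on_continuous {I f k} : C2_on I f -> (k <= 2)%N ->
  {in I, continuous (derive1n k f)}.
Proof.
move=> [df cf] k2 x xI; have [dfx df'x] := df x xI.
move: k2; rewrite leq_eqVlt => /orP[/eqP -> |]; first exact: cf.
rewrite ltnS leq_eqVlt => /orP[/eqP -> |]; first exact: derivable_continuous df'x.
by rewrite ltnS leqn0 => /eqP ->; exact: derivable_continuous dfx.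
Qed.

Lemma derive1_onM {I f g} : C2_on I f -> C2_on I g ->
  {in I, derive1 (f * g) =1 derive1 f * g + f * derive1 g}.
Proof.
move=> Cf Cg y yI; have [dfy _] := Cf.1 y yI; have [dgy _] := Cg.1 y yI.
exact: derive1M.
Qed.

Context {I : interval R} (oI : open [set` I]).

Lemma near_eq_on {f g x} : {in I, f =1 g} -> x \in I -> {near x, f =1 g}.
Proof. by move=> fg xI; apply: filterS (oI x xI) => y /fg. Qed.

Lemma derivable_eq_on {f g x} : {in I, f =1 g} -> x \in I ->
  derivable g x 1 -> derivable f x 1.
Proof. by move=> fg xI; apply: near_eq_derivable; apply: near_eq_on xI => y /fg ->. Qed.

Lemma continuous_eq_on {f g x} : {in I, f =1 g} -> x \in I ->
  {for x, continuous g} -> {for x, continuous f}.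
Proof.
move=> fg xI cg; have fgx := near_eq_on fg xI.
rewrite /prop_for /continuous_at (nbhs_singleton fgx).
by apply: cvg_trans cg; apply: near_eq_cvg; apply: filterS fgx.
Qed.

Lemma derive1_eq_on {f g} : {in I, f =1 g} -> {in I, derive1 f =1 derive1 g}.
Proof. by move=> fg x xI; rewrite !derive1E; apply/near_eq_derive/near_eq_on. Qed.

Lemma C2_on_eq {f g} : {in I, f =1 g} -> C2_on I f -> C2_on I g.
Proof.
move=> fg Cf; have gf y : y \in I -> g y = f y by move=> /fg ->.
have g'f' := derive1_eq_on gf; have g''f'' := derive1_eq_on g'f'.
split=> x xI; last exact: continuous_eq_on g''f'' xI (Cf.2 x xI).
have [dfx df'x] := Cf.1 x xI.
by split; [exact: derivable_eq_on gf xI dfx|exact: derivable_eq_on g'f' xI df'x].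
Qed.

Lemma derive1n2M {f g} : C2_on I f -> C2_on I g -> {in I, forall x,
  derive1n 2 (f * g) x =
  derive1n 2 f x * g x + 2 * (derive1 f x * derive1 g x) + f x * derive1n 2 g x}.
Proof.
move=> Cf Cg x xI; rewrite /= (derive1_eq_on (derive1_onM Cf Cg) x xI).
have [/is_derive1 Df /is_derive1 Df'] := Cf.1 x xI.
have [/is_derive1 Dg /is_derive1 Dg'] := Cg.1 x xI.
rewrite (derive1_val (is_deriveD (is_deriveM Df' Dg) (is_deriveM Df Dg'))).
(* generalizing the atoms keeps [ring] from unfolding the limits inside [derive1] *)
rewrite -![_ *: _]/(_ * _); move: (f x) (g x) (derive1 f x) (derive1 g x).
by move: (derive1 (derive1 f) x) (derive1 (derive1 g) x) => *; ring.
Qed.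

Lemma C2_onM {f g} : C2_on I f -> C2_on I g -> C2_on I (f * g).
Proof.
move=> Cf Cg; split=> x xI; have [dfx df'x] := Cf.1 x xI; have [dgx dg'x] := Cg.1 x xI.
  split; first exact: derivableM dfx dgx.
  apply: (derivable_eq_on (derive1_onM Cf Cg) xI).
  exact: derivableD (derivableM df'x dgx) (derivableM dfx dg'x).
apply: (continuous_eq_on (derive1n2M Cf Cg) xI).
have [cf0 cf1] := (derivable_continuous dfx, derivable_continuous df'x).
have [cg0 cg1] := (derivable_continuous dgx, derivable_continuous dg'x).
have c2 : {for x, continuous (fun=> 2 : R)} by exact: cvg_cst.
exact: continuousD (continuousD (continuousM (Cf.2 x xI) cg0)
  (continuousM c2 (continuousM cf1 cg1))) (continuousM cf0 (Cg.2 x xI)).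
Qed.

Lemma C2_onB {f g} : C2_on I f -> C2_on I g -> C2_on I (f - g).
Proof.
move=> Cf Cg; have f'g' : {in I, derive1 (f - g) =1 derive1 f - derive1 g}.
  by move=> y yI; exact: derive1B (Cf.1 y yI).1 (Cg.1 y yI).1.
have f''g'' : {in I, derive1n 2 (f - g) =1 derive1n 2 f - derive1n 2 g}.
  move=> y yI; rewrite /= (derive1_eq_on f'g' y yI).
  exact: derive1B (Cf.1 y yI).2 (Cg.1 y yI).2.
split=> x xI; last exact: continuous_eq_on f''g'' xI (continuousB (Cf.2 x xI) (Cg.2 x xI)).
have [dfx df'x] := Cf.1 x xI; have [dgx dg'x] := Cg.1 x xI.
split; first exact: derivableB dfx dgx.
exact: derivable_eq_on f'g' xI (derivableB df'x dg'x).
Qed.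

End twice_derivable_on.

Section open_interval_bounds.
Context {R : realType}.
Local Notation mu := (@lebesgue_measure R).
Implicit Types (a b M : R) (f F h : R -> R).

Lemma bounded_near_cvg {h a b} {l0 l1 : R} : a < b -> {in `]a, b[, continuous h} ->
  h x @[x --> a^'+] --> l0 -> h x @[x --> b^'-] --> l1 ->
  exists M, {in `]a, b[, forall t, `|h t| <= M}.
Proof.
move=> ab ch ha hb.
have bound_near l t : `|l - h t| < 1 -> `|h t| <= `|l| + 1.
  by move=> lt1; have := ler_normB l (l - h t); rewrite opprB addrC subrK; lra.
have [da da0 Ha] : exists2 d, 0 < d & forall t, a < t < a + d -> `|h t| <= `|l0| + 1.
  move/cvgr_dist_lt: ha => /(_ 1 ltr01) [e /= e0 He].
  exists e => // t /andP[ta te]; apply: bound_near; apply: He => //=.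
  by rewrite distrC gtr0_norm ?subr_gt0 //; lra.
have [db db0 Hb] : exists2 d, 0 < d & forall t, b - d < t < b -> `|h t| <= `|l1| + 1.
  move/cvgr_dist_lt: hb => /(_ 1 ltr01) [e /= e0 He].
  exists e => // t /andP[te tb]; apply: bound_near; apply: He => //=.
  by rewrite gtr0_norm ?subr_gt0 //; lra.
pose d := Num.min (Num.min da db) (b - a) / 2.
have [dda ddb dab] : [/\ d <= da / 2, d <= db / 2 & d <= (b - a) / 2].
  by split; rewrite ler_pM2r // !ge_min lexx ?orbT.
have d0 : 0 < d by rewrite divr_gt0 // !lt_min da0 db0 subr_gt0 ab.
have [c _ Hc] : exists2 c, c \in `[a + d, b - d] &
    forall t, t \in `[a + d, b - d] -> `|h t| <= `|h c|.
  apply: EVT_max; first lra.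
  apply: continuous_in_subspaceT => x /set_mem; rewrite /= in_itv /= => /andP[x1 x2].
  by apply: cvg_norm; apply: ch; rewrite in_itv /=; apply/andP; split; lra.
exists (Num.max (Num.max (`|l0| + 1) (`|l1| + 1)) `|h c|) => t.
rewrite in_itv /= => /andP[ta tb]; rewrite !le_max.
have [tad|tad] := ltP t (a + d); first by rewrite Ha ?orTb //; apply/andP; split; lra.
have [tbd|tbd] := ltP (b - d) t; first by rewrite Hb ?orbT //; apply/andP; split; lra.
by rewrite Hc ?orbT // in_itv /= tad tbd.
Qed.

Lemma bigcup_itvcc_shrink {a b} : a < b ->
  \bigcup_k [set` `[a + (b - a) / k.+3%:R, b - (b - a) / k.+3%:R]] = [set` `]a, b[].
Proof.
move=> ab; apply/seteqP; split=> x.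
  move=> [k _]; have : 0 < (b - a) / k.+3%:R by rewrite divr_gt0 ?subr_gt0.
  set q := (b - a) / _ => q0; rewrite /= !in_itv /= => /andP[? ?].
  by apply/andP; split; lra.
rewrite /= in_itv /= => /andP[ax xb].
pose d := Num.min (x - a) (b - x).
have d0 : 0 < d by rewrite lt_min !subr_gt0 ax xb.
exists (Num.truncn ((b - a) / d)) => //; set k := Num.truncn _.
have : (b - a) / k.+3%:R <= d.
  rewrite ler_pdivrMr ?ltr0n // mulrC -ler_pdivrMr //; apply/ltW.
  by apply: lt_trans (truncnS_gt _) _; rewrite ltr_nat.
have [? ?] : d <= x - a /\ d <= b - x by split; rewrite ge_min lexx ?orbT.
by set q := (b - a) / _ => ?; rewrite /= in_itv /=; apply/andP; split; lra.
Qed.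

(* Exhaust ]a, b[ by the compact intervals [a + e_k, b - e_k]: on each of them the
   fundamental theorem of calculus bounds the integral by 2M, and monotone
   convergence passes to the limit. *)
Lemma ge0_integral_itvoo_le_primitive {f F a b M} : a < b ->
  {in `]a, b[, forall x, 0 <= f x} -> {in `]a, b[, continuous f} ->
  {in `]a, b[, forall x : R, is_derive x 1 F (f x)} ->
  {in `]a, b[, forall x, `|F x| <= M} ->
  (\int[mu]_(x in `]a, b[) (f x)%:E <= (M *+ 2)%:E)%E.
Proof.
move=> ab f0 cf dF FM.
pose e (k : nat) := (b - a) / k.+3%:R; pose I k := [set` `[a + e k, b - e k]] : set R.
have e0 k : 0 < e k by rewrite divr_gt0 // subr_gt0.
have e_lt k : e k * 2 < b - a.
  by rewrite /e mulrAC ltr_pdivrMr // ltr_pM2l ?subr_gt0 // ltr_nat.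
have cupI : \bigcup_k I k = [set` `]a, b[] := bigcup_itvcc_shrink ab.
have inI k x : I k x -> x \in `]a, b[.
  by move=> Ix; suff : [set` `]a, b[] x by []; rewrite -cupI; exists k.
have I_nd : {homo I : n m / (n <= m)%N >-> (n <= m)%O}.
  move=> n m nm; rewrite subsetEset => x; rewrite /I /= !in_itv /= => /andP[? ?].
  have : e m <= e n.
    by rewrite /e ler_pdivrMr // mulrAC ler_pdivlMr // ler_pM2l ?subr_gt0 // ler_nat !ltnS.
  by move=> ?; apply/andP; split; lra.
have mf : measurable_fun `]a, b[ f.
  by apply: open_continuous_measurable_fun (@itv_open _ R a b) _ => x /set_mem /cf.
have mfI k : measurable_fun (I k) (EFin \o f).
  by apply/measurable_EFinP; apply: measurable_funS mf => // x /inI.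
have fI0 k x : I k x -> (0 <= (f x)%:E)%E by move=> /inI /f0; rewrite lee_fin.
have := ge0_nondecreasing_set_cvg_integral (mu := mu) I_nd (fun k => measurable_itv _) mfI fI0.
rewrite cupI => h; rewrite -(cvg_lim _ h) //.
apply: lime_le; first by apply/cvg_ex; eexists; exact: h.
apply: nearW => k /=.
have inab x : a + e k <= x <= b - e k -> x \in `]a, b[.
  by move=> xI; apply: (inI k); rewrite /I /= in_itv /= xI.
have [ae be] : (a + e k \in `]a, b[) /\ (b - e k \in `]a, b[).
  by have := e_lt k; have := e0 k => ? ?; split; apply: inab; apply/andP; split; lra.
have dFk x : a + e k < x < b - e k -> is_derive x 1 F (f x).
  by move=> /andP[? ?]; apply/dF/inab/andP; split; lra.
rewrite (@continuous_FTC2 _ f F); first last.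
- by move=> x; rewrite in_itv /= => /dFk /derive1_val.
- split; first by move=> x; rewrite in_itv /= => /dFk /is_derive_derivable.
  + exact/cvg_at_right_filter/derivable_continuous/is_derive_derivable/dF.
  + exact/cvg_at_left_filter/derivable_continuous/is_derive_derivable/dF.
- by apply: continuous_in_subspaceT => x; rewrite inE /= in_itv /= => /inab /cf.
- by have := e_lt k; lra.
rewrite -EFinB lee_fin; have := FM _ ae; have := FM _ be; rewrite !ler_norml mulr2n.
by move=> /andP[? ?] /andP[? ?]; lra.
Qed.

End open_interval_bounds.

Section sine.
Context {R : realType}.
Local Notation mu := (@lebesgue_measure R).
Implicit Types (r s : R -> R) (a b c e m n t : R).

Let open_0pi : open [set` `]0, pi[ : interval R] := @itv_open _ R 0 pi.

Definition sinpow b t : R := sin t `^ b.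

Lemma sinpowD b c {t} : 0 < sin t -> sinpow (b + c) t = sinpow b t * sinpow c t.
Proof. by move=> st; rewrite /sinpow powRD // (gt_eqF st) implybT. Qed.

Lemma sinpowBn b (k : nat) {t} : 0 < sin t ->
  sinpow (b - k%:R) t = sinpow b t / sin t ^+ k.
Proof.
move=> st; rewrite /sinpow powRB ?powR_mulrn ?(ltW st) //.
by rewrite (gt_eqF st) implybT.
Qed.

Lemma sinpow1 {t} : 0 < sin t -> sinpow 1 t = sin t.
Proof. by move=> st; rewrite /sinpow powRr1 // ltW. Qed.

Lemma sinpow_le1 c t : 0 <= c -> sinpow c t <= 1.
Proof.
move=> c0; have [s0|s0] := leP 0 (sin t); last by rewrite /sinpow lt0_powR1.
apply: (@le_trans _ _ (1 `^ c)); last by rewrite powR1.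
by apply: ge0_ler_powR; rewrite ?nnegrE ?sin_le1.
Qed.

Lemma is_derive_sinpow b {t} : 0 < sin t ->
  is_derive t 1 (sinpow b) (b * sinpow (b - 1) t * cos t).
Proof. by move=> st; exact: is_derive1_comp (is_derive1_powR b st) (is_derive_sin t). Qed.

Lemma sinpow_continuous b : {in `]0, pi[, continuous (sinpow b)}.
Proof.
move=> t /sin_gt0_pi st.
exact/derivable_continuous/is_derive_derivable/is_derive_sinpow.
Qed.

Lemma derive1_sinpow b :
  {in `]0, pi[, derive1 (sinpow b) =1 fun t => b * sinpow (b - 1) t * cos t}.
Proof. by move=> t /sin_gt0_pi st; apply/derive1_val/is_derive_sinpow. Qed.

Lemma is_derive_derive1_sinpow b {t} : 0 < sin t ->
  is_derive t 1 (fun y => b * sinpow (b - 1) y * cos y)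
    (b * ((b - 1) * sinpow (b - 2) t * (cos t * cos t) - sinpow b t)).
Proof.
move=> st; have s0 : sin t != 0 by rewrite gt_eqF.
apply: is_derive_eq (is_deriveM (is_deriveM (is_derive_cst b t 1)
  (is_derive_sinpow (b - 1) st)) (is_derive_cos t)) _.
rewrite -![_ *: _]/(_ * _) !fctE /cst (sinpowBn _ 2 st) !(sinpowBn _ 1 st).
by move: (sinpow b t) (cos t) => p c; field.
Qed.

Lemma derive1n2_sinpow b : {in `]0, pi[, derive1n 2 (sinpow b) =1
  fun t => b * ((b - 1) * sinpow (b - 2) t * (cos t * cos t) - sinpow b t)}.
Proof.
move=> t tI; rewrite /= (derive1_eq_on open_0pi (derive1_sinpow b) t tI).
exact/derive1_val/is_derive_derive1_sinpow/sin_gt0_pi.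
Qed.

Lemma C2_on_sinpow b : C2_on `]0, pi[ (sinpow b).
Proof.
split=> t tI; have st := sin_gt0_pi tI.
  split; first exact: is_derive_derivable (is_derive_sinpow b st).
  apply: (derivable_eq_on open_0pi (derive1_sinpow b) tI).
  exact: is_derive_derivable (is_derive_derive1_sinpow b st).
apply: (continuous_eq_on open_0pi (derive1n2_sinpow b) tI).
have [cb cb1] : {for t, continuous (fun=> b)} /\ {for t, continuous (fun=> b - 1)}.
  by split; exact: cvg_cst.
have cc : {for t, continuous cos} := @continuous_cos R t.
exact: continuousM cb (continuousB (continuousM (continuousM cb1
  (sinpow_continuous (b - 2) t tI)) (continuousM cc cc)) (sinpow_continuous b t tI)).
Qed.

Lemma C2_on_cos (I : interval R) : C2_on I cos.
Proof.
have cos' : derive1 cos = fun t => - sin t.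
  by apply/funext => t; exact: derive1_val (is_derive_cos t).
have cos'' : derive1n 2 cos = fun t => - cos t.
  by apply/funext => t; rewrite /= cos'; exact: derive1_val (is_deriveN (is_derive_sin t)).
split=> t _; last by rewrite cos''; exact: continuousN (@continuous_cos R t).
split; first exact: is_derive_derivable (is_derive_cos t).
by rewrite cos'; exact: is_derive_derivable (is_deriveN (is_derive_sin t)).
Qed.

Lemma C2_on_cot : C2_on `]0, pi[ (fun t => cos t / sin t).
Proof.
apply: (C2_on_eq open_0pi _ (C2_onM open_0pi (C2_on_cos _) (C2_on_sinpow (-1)))).
by move=> t /sin_gt0_pi st; rewrite fctE /sinpow powR_inv1 // ltW.
Qed.

Lemma C2_on_derive1n r (I : interval R) (k : nat) :
  (forall k, (k < 4)%N -> forall x, derivable (derive1n k r) x 1) ->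
  continuous (derive1n 4 r) -> (k <= 2)%N -> C2_on I (derive1n k r).
Proof.
move=> dr cr4 k2; split=> x _.
  by split; [apply: (dr k (leq_trans k2 _))|exact: (dr k.+1 k2)].
move: k2; rewrite leq_eqVlt => /orP[/eqP -> | k1]; first exact: cr4.
exact: derivable_continuous (dr k.+2 k1 x).
Qed.

Lemma C2_on_astig {r} : W4 r -> C2_on `]0, pi[ (astig r).
Proof.
move=> [dr [cr4 _]].
have -> : astig r = derive1n 2 r - derive1n 1 r * (fun t => cos t / sin t).
  apply/funext => t; rewrite /astig /rad2 /rad1 !fctE /=.
  by move: (r t) (derive1 r t) (derive1 (derive1 r) t) (cos t / sin t) => *; ring.
apply: C2_onB => //; first exact: C2_on_derive1n.
by apply: C2_onM => //; [exact: C2_on_derive1n|exact: C2_on_cot].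
Qed.

Definition sin_ratio m s (i : nat) t := derive1n i s t / sinpow (m - i%:R) t.

Definition Lnn_poly a n c w h0 h1 h2 : R :=
  h2 + (1 - 2 * a) * c * h1 + (a ^+ 2 * c ^+ 2 + (a + n * (n + 1)) * w ^+ 2 - n ^+ 2) * h0.

Lemma Lnn_div_sinpow s a n m : C2_on `]0, pi[ s -> {in `]0, pi[, forall t,
  Lnn n (fun y => s y / sin y `^ a) t = sinpow (m - a - 2) t *
    Lnn_poly a n (cos t) (sin t) (sin_ratio m s 0 t) (sin_ratio m s 1 t) (sin_ratio m s 2 t)}.
Proof.
move=> Cs t tI; have st := sin_gt0_pi tI; have CP := C2_on_sinpow (- a).
have -> : (fun y => s y / sin y `^ a) = s * sinpow (- a).
  by apply/funext => y; rewrite fctE /sinpow powRN.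
rewrite /Lnn (derive1n2M open_0pi Cs CP t tI) (derive1_onM Cs CP t tI) !fctE.
rewrite (derive1_sinpow _ t tI) (derive1n2_sinpow _ t tI) /sin_ratio.
rewrite (sinpowBn (m - a) 2 st) (sinpowD m (- a) st) !(sinpowBn m _ st).
rewrite (sinpowBn (- a) 2 st) (sinpowBn (- a) 1 st) /Lnn_poly /=.
have [w0 v0] : sin t != 0 /\ sinpow m t != 0 by rewrite !gt_eqF ?powR_gt0.
move: w0 v0 (s t) (derive1 s t) (derive1 (derive1 s) t) (sinpow (- a) t).
move: (sinpow m t) (cos t) (sin t) => v c w w0 v0 s0 s1 s2 p.
by field; rewrite v0 w0.
Qed.

Lemma Lnn_poly_cvg (F : set_system R) {FF : Filter F} a n {c w l0 l1 l2 : R}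
    {C W h0 h1 h2 : R -> R} :
  C @ F --> c -> W @ F --> w -> h0 @ F --> l0 -> h1 @ F --> l1 -> h2 @ F --> l2 ->
  (fun t => Lnn_poly a n (C t) (W t) (h0 t) (h1 t) (h2 t)) @ F --> Lnn_poly a n c w l0 l1 l2.
Proof.
move=> Cc Ww h0l h1l h2l; rewrite /Lnn_poly; under eq_fun do rewrite !expr2.
have k_ k : (fun=> k : R) @ F --> k by exact: cvg_cst.
rewrite !expr2; apply: cvgD (cvgD h2l (cvgM (cvgM (k_ _) Cc) h1l)) _.
exact: cvgM (cvgB (cvgD (cvgM (k_ _) (cvgM Cc Cc)) (cvgM (k_ _) (cvgM Ww Ww))) (k_ _)) h0l.
Qed.

Lemma sin_ratio_continuous s m (i : nat) : C2_on `]0, pi[ s -> (i <= 2)%N ->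
  {in `]0, pi[, continuous (sin_ratio m s i)}.
Proof.
move=> Cs i2 t tI; have p0 : sinpow (m - i%:R) t != 0.
  by rewrite gt_eqF ?powR_gt0 ?sin_gt0_pi.
exact: continuousM (C2_on_continuous Cs i2 t tI) (continuousV p0 (sinpow_continuous _ t tI)).
Qed.

(* F' = sin^(c-1) + (c+1)/c * (1 - sin^(c+1)) >= sin^(c-1) >= 0, and F is bounded. *)
Lemma integrable_sinpow c : 0 < c ->
  mu.-integrable `]0, pi[ (fun t => (sinpow (c - 1) t)%:E).
Proof.
move=> c0; pose F t := (sinpow c t * cos t + (c + 1) * t) / c.
pose f t := sinpow (c - 1) t + (c + 1) / c * (1 - sinpow (c + 1) t).
have f_ge t : sinpow (c - 1) t <= f t.
  by rewrite lerDl mulr_ge0 ?divr_ge0 ?subr_ge0 ?sinpow_le1 //; lra.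
have f0 t : 0 <= f t by apply: le_trans (f_ge t); exact: powR_ge0.
have dF : {in `]0, pi[, forall t, is_derive t 1 F (f t)}.
  move=> t /sin_gt0_pi st.
  have := is_deriveM (is_deriveD (is_deriveM (is_derive_sinpow c st) (is_derive_cos t))
    (is_deriveM (is_derive_cst (c + 1) t 1) (is_derive_id t 1))) (is_derive_cst c^-1 t 1).
  move=> /is_derive_eq; apply; rewrite -![_ *: _]/(_ * _) /f mulr0 add0r /cst.
  rewrite (sinpowBn c 1 st) (sinpowD c 1 st) (sinpow1 st).
  have := cos2Dsin2 t; have [cn0 wn0] : c != 0 /\ sin t != 0 by split; rewrite gt_eqF.
  move: (sinpow c t) (cos t) (sin t) wn0 => p co w wn0 cs.
  apply/eqP; rewrite -subr_eq0; apply/eqP.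
  transitivity (p / w * (co ^+ 2 + w ^+ 2 - 1)); first by field; rewrite wn0 cn0.
  by rewrite cs subrr mulr0.
have FM : {in `]0, pi[, forall t, `|F t| <= (1 + (c + 1) * pi) / c}.
  move=> t; rewrite in_itv /= => /andP[t0 tpi].
  have ci : 0 < c^-1 by rewrite invr_gt0.
  rewrite /F normrM (gtr0_norm ci) ler_pM2r //.
  have := sinpow_le1 c t (ltW c0); have := powR_ge0 (sin t) c.
  have := cos_geN1 t; have := cos_le1 t; rewrite /sinpow ler_norml => *.
  by apply/andP; split; nra.
have cf : {in `]0, pi[, continuous f}.
  move=> t tI; have ck k : {for t, continuous (fun=> k : R)} by exact: cvg_cst.
  exact: continuousD (sinpow_continuous _ t tI)
    (continuousM (ck _) (continuousB (ck _) (sinpow_continuous _ t tI))).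
have mf : measurable_fun `]0, pi[ f.
  by apply: open_continuous_measurable_fun open_0pi _ => t /set_mem /cf.
have intf : mu.-integrable `]0, pi[ (fun t => (f t)%:E).
  apply/integrableP; split; first exact/measurable_EFinP.
  under eq_integral => t _ do rewrite gee0_abs ?lee_fin //.
  apply: le_lt_trans (ge0_integral_itvoo_le_primitive (pi_gt0 R) (fun t _ => f0 t) cf dF FM) _.
  exact: ltry.
apply: le_integrable intf => //.
  apply/measurable_EFinP; apply: open_continuous_measurable_fun open_0pi _.
  by move=> t /set_mem; exact: sinpow_continuous.
by move=> t _; rewrite !abse_EFin lee_fin !ger0_norm ?powR_ge0.
Qed.

Lemma L2sin_sinpow_bound {g e} K : -1 < e -> {in `]0, pi[, continuous g} ->
  {in `]0, pi[, forall t, `|g t| <= K * sinpow e t} -> L2sin g.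
Proof.
move=> e1 cg gK; have c0 : 0 < 2 * e + 2 by lra.
rewrite /L2sin; apply: le_integrable (integrableZl _ (K ^+ 2) (integrable_sinpow _ c0)) => //.
  apply/measurable_EFinP; apply: open_continuous_measurable_fun open_0pi _.
  move=> t /set_mem tI; under eq_fun do rewrite expr2.
  exact: continuousM (continuousM (cg t tI) (cg t tI)) (@continuous_sin R t).
move=> t tI; have st := sin_gt0_pi tI.
have gb : `|g t| ^+ 2 <= (K * sinpow e t) ^+ 2.
  by apply: lerXn2r; rewrite ?nnegrE ?(le_trans _ (gK t tI)) ?gK.
have -> : 2 * e + 2 - 1 = e + e + 1 by ring.
rewrite -EFinM !abse_EFin lee_fin !(sinpowD _ _ st) (sinpow1 st).
move: gb (powR_ge0 (sin t) e); rewrite -/(sinpow e t); move: (sinpow e t) => p gb p0.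
rewrite !ger0_norm ?(mulr_ge0 (sqr_ge0 _) (ltW st)) //; last first.
  exact: mulr_ge0 (sqr_ge0 K) (mulr_ge0 (mulr_ge0 p0 p0) (ltW st)).
rewrite mulrA ler_pM2r //.
by rewrite -real_normK ?num_real // (le_trans gb) // exprMn [p ^+ 2]expr2.
Qed.

Lemma L2sin_Lnn_div_sinpow s a n m (c d : nat -> R) : C2_on `]0, pi[ s ->
  -1 < m - a - 2 ->
  (forall i, (i <= 2)%N -> sin_ratio m s i t @[t --> 0^'+] --> c i /\
                           sin_ratio m s i t @[t --> pi^'-] --> d i) ->
  L2sin (Lnn n (fun t => s t / sin t `^ a)).
Proof.
move=> Cs e1 lim.
pose Q t := Lnn_poly a n (cos t) (sin t) (sin_ratio m s 0 t) (sin_ratio m s 1 t)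
  (sin_ratio m s 2 t).
have cQ : {in `]0, pi[, continuous Q}.
  move=> t tI; apply: Lnn_poly_cvg; [exact: continuous_cos|exact: continuous_sin|..];
    exact: sin_ratio_continuous.
have [K QK] : exists K, {in `]0, pi[, forall t, `|Q t| <= K}.
  apply: (bounded_near_cvg (pi_gt0 R) cQ).
    exact: Lnn_poly_cvg (cvg_at_right_filter (@continuous_cos R 0))
      (cvg_at_right_filter (@continuous_sin R 0)) (lim 0 isT).1 (lim 1 isT).1 (lim 2 isT).1.
  exact: Lnn_poly_cvg (cvg_at_left_filter (@continuous_cos R pi))
    (cvg_at_left_filter (@continuous_sin R pi)) (lim 0 isT).2 (lim 1 isT).2 (lim 2 isT).2.
apply: (L2sin_sinpow_bound K e1) => t tI.
  exact: (continuous_eq_on open_0pi (Lnn_div_sinpow s a n m Cs) tI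
    (continuousM (sinpow_continuous (m - a - 2) t tI) (cQ t tI))).
rewrite (Lnn_div_sinpow s a n m Cs t tI) normrM ger0_norm ?powR_ge0 // [K * _]mulrC.
by rewrite ler_wpM2l ?powR_ge0 // QK.
Qed.

Lemma div_sin2_cvg0 (F : set_system R) {FF : Filter F} s m (l : R) :
  2 < m -> (\forall t \near F, 0 < sin t) -> sin t @[t --> F] --> 0 ->
  sin_ratio m s 0 t @[t --> F] --> l -> s t / sin t ^+ 2 @[t --> F] --> 0.
Proof.
move=> m2 sF0 sF ratio.
have sF0' : sin t @[t --> F] --> (0 : R)^'+.
  by move=> A /sF; apply: filterS2 sF0 => t st /(_ st).
have m20 : 0 < m - 2 by rewrite subr_gt0.
have := cvgM ratio (cvg_comp _ _ sF0' (powR_cvg0 m20)); rewrite mulr0 => lim0.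
apply: (@cvg_trans _ ((sin_ratio m s 0 t * sinpow (m - 2) t) @[t --> F])); last exact: lim0.
apply: near_eq_cvg; apply: filterS sF0 => t st /=.
have p0 : 0 < sinpow m t by exact: powR_gt0.
rewrite /sin_ratio subr0 (sinpowBn m 2 st) derive1n0; move: (sinpow m t) p0 => p p0.
by field; rewrite !gt_eqF.
Qed.

End sine.

Theorem proposition5p6 (R : realType) (n : R) (r : R -> R) :
  -1 < n < 1 ->
  W4 r ->
  (exists m : R, n + 3 < m /\
     exists c d : nat -> R,
       forall i : nat, (i <= 2)%N ->
         ((fun t => derive1n i (astig r) t / (sin t `^ (m - i%:R)))
            @ 0^'+ --> c i) /\
         ((fun t => derive1n i (astig r) t / (sin t `^ (m - i%:R)))
            @ pi^'- --> d i)) ->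
  L2sin (Lnn n (fun t => astig r t / sin t `^ (n + 2))) /\
  (exists l0 lpi : R,
     ((fun t => astig r t / sin t ^+ 2) @ 0^'+ --> l0) /\
     ((fun t => astig r t / sin t ^+ 2) @ pi^'- --> lpi) /\
     n * l0 = 0 /\ n * lpi = 0).
Proof.
move=> /andP[n1 _] W [m [nm [c [d lim]]]]; have Cs := C2_on_astig W.
have [e1 m2] : -1 < m - (n + 2) - 2 /\ 2 < m by split; lra.
split; first exact: L2sin_Lnn_div_sinpow Cs e1 lim.
exists 0, 0; split; [|split; last by rewrite mulr0].
- apply: div_sin2_cvg0 m2 _ _ (lim 0%N isT).1.
    by near=> t; apply: sin_gt0_pi; apply/andP; split; near: t;
      [exact: nbhs_right_gt|exact: nbhs_right_lt (pi_gt0 R)].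
  by have := cvg_at_right_filter (@continuous_sin R 0); rewrite sin0.
- apply: div_sin2_cvg0 m2 _ _ (lim 0%N isT).2.
    by near=> t; apply: sin_gt0_pi; apply/andP; split; near: t;
      [exact: nbhs_left_gt (pi_gt0 R)|exact: nbhs_left_lt].
  by have := cvg_at_left_filter (@continuous_sin R pi); rewrite sinpi.
Unshelve. all: by end_near.
Qed.
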